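(* Let $C$ be a convex subset of the Euclidean plane $\mathbb{R}^2$ (not necessarily closed or bounded). Then for every finite point set $P \subset \mathbb{R}^2$, the straight-line drawing of $G_{st}(P,C)$ is a plane graph.
   Context: For a finite set $P \subset \mathbb{R}^2$ and a set $C \subseteq \mathbb{R}^2$, $G_{st}(P,C)$ is the graph with vertex set $P$ in which two distinct points $u,v \in P$ are adjacent if and only if there is a positively scaled translate (homothet) $\lambda C + \mathbf{v} = \{\lambda x + \mathbf{v} : x \in C\}$, with $\lambda > 0$ and $\mathbf{v} \in \mathbb{R}^2$, such that $P \cap (\lambda C + \mathbf{v}) = \{u,v\}$. The graph is drawn with each vertex at its point and each edge as the closed straight-line segment between its endpoints. A drawing is a plane graph if (1) no vertex lies on an edge of which it is not an endpoint, and (2) no two edges cross, i.e., two edges may intersect only at a common endpoint. *)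

From Stdlib Require Import Reals List.
Open Scope R_scope.

Definition pt := (R * R)%type.

Definition padd (p q : pt) : pt := (fst p + fst q, snd p + snd q).
Definition pscale (l : R) (p : pt) : pt := (l * fst p, l * snd p).

Definition convex (C : pt -> Prop) : Prop :=
  forall x y t, C x -> C y -> 0 <= t <= 1 ->
    C (padd (pscale (1 - t) x) (pscale t y)).

Definition homothet (C : pt -> Prop) (lam : R) (v : pt) (p : pt) : Prop :=
  exists x, C x /\ p = padd (pscale lam x) v.

Definition st_adj (P : list pt) (C : pt -> Prop) (u v : pt) : Prop :=
  In u P /\ In v P /\ u <> v /\
  exists lam (w : pt), 0 < lam /\
    forall p, In p P -> (homothet C lam w p <-> (p = u \/ p = v)).

Definition on_seg (a b p : pt) : Prop :=
  exists t, 0 <= t <= 1 /\ p = padd (pscale (1 - t) a) (pscale t b).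

Definition plane_drawing (P : list pt) (adj : pt -> pt -> Prop) : Prop :=
  (forall u v w, adj u v -> In w P -> w <> u -> w <> v -> ~ on_seg u v w) /\
  (forall a b c d p, adj a b -> adj c d ->
     ~ ((a = c /\ b = d) \/ (a = d /\ b = c)) ->
     on_seg a b p -> on_seg c d p ->
     (p = a \/ p = b) /\ (p = c \/ p = d)).

(* The edge uv of G_st(P,C) is witnessed by a homothet H of C with H ∩ P = {u,v}.
   Since H is convex it contains the segment uv, so no further point of P lies on
   that segment.  For two edges ab ⊂ H1 and cd ⊂ H2 meeting at p, the key fact is
   that one of c, d lies in H1 or one of a, b lies in H2; exactness of H1 ∩ P and
   H2 ∩ P then forces a common endpoint, and two edges from a common endpoint a
   meet only at a, as otherwise one of them would contain the far end of the other.
   For the key fact, pull everything back to C: with p = l1 X + w1 = l2 Y + w2 and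
   k = l2/l1, an endpoint at offset o from p lies in H1 iff X + o/l1 ∈ C and in H2
   iff Y + o/l2 ∈ C.  Unless the segments are parallel, Y - X lies in a cone spanned
   by the C-directions towards one endpoint of each segment, and a convex
   combination inside the resulting triangle gives the exchange. *)

From Stdlib Require Import Reals List Lra.
Open Scope R_scope.

Lemma Rle_div_iff a b c : 0 < c -> (a <= b / c <-> a * c <= b).
Proof.
  intros Hc; split; intros H.
  - replace b with (b / c * c) by (field; lra). apply Rmult_le_compat_r; lra.
  - replace a with (a * c / c) by (field; lra). unfold Rdiv.
    apply Rmult_le_compat_r; [apply Rlt_le, Rinv_0_lt_compat|]; lra.
Qed.

Lemma Rdiv_le_iff a b c : 0 < c -> (a / c <= b <-> a <= b * c).
Proof.
  intros Hc; split; intros H.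
  - replace a with (a / c * c) by (field; lra). apply Rmult_le_compat_r; lra.
  - replace b with (b * c / c) by (field; lra). unfold Rdiv.
    apply Rmult_le_compat_r; [apply Rlt_le, Rinv_0_lt_compat|]; lra.
Qed.

Lemma Rdiv_le_div a b c d : 0 < b -> 0 < d -> a * d <= c * b -> a / b <= c / d.
Proof.
  intros Hb Hd H. apply Rle_div_iff; [exact Hd|].
  replace (a / b * d) with (a * d / b) by (field; lra).
  apply Rdiv_le_iff; lra.
Qed.

Lemma Rdiv_unit_interval a b : 0 <= a <= b -> 0 < b -> 0 <= a / b <= 1.
Proof.
  intros Hab Hb; split.
  - apply Rle_div_iff; lra.
  - apply Rdiv_le_iff; lra.
Qed.

Ltac pt_eq :=
  repeat match goal with p : pt |- _ => destruct p end;
  unfold padd, pscale; simpl; f_equal; field; repeat split; lra.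

Ltac transport H := refine (eq_ind _ _ H _ _); pt_eq.

Definition cross (e u : pt) : R := fst e * snd u - snd e * fst u.

Lemma cross_eq0_parallel e u : cross e u = 0 -> e = (0, 0) \/ exists m, u = pscale m e.
Proof.
  destruct e as [e1 e2], u as [u1 u2]; unfold cross; simpl; intros Hc.
  destruct (Req_dec (e1 * e1 + e2 * e2) 0) as [H0|Hn].
  - left. f_equal; nra.
  - right. exists ((u1 * e1 + u2 * e2) / (e1 * e1 + e2 * e2)).
    assert (H1 : e1 * (e1 * u2 - e2 * u1) = 0) by (rewrite Hc; ring).
    assert (H2 : e2 * (e1 * u2 - e2 * u1) = 0) by (rewrite Hc; ring).
    unfold pscale; simpl; f_equal; field_simplify_eq; auto; lra.
Qed.

Lemma cross_neq0_basis e u z : cross e u <> 0 ->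
  exists z1 z2, z = padd (pscale z1 e) (pscale z2 u).
Proof.
  intros Hc. exists (cross z u / cross e u), (cross e z / cross e u).
  revert Hc; destruct e, u, z; unfold cross, padd, pscale; simpl; intros Hc.
  f_equal; field; exact Hc.
Qed.

Lemma convex_on_seg (S : pt -> Prop) x y z :
  convex S -> S x -> S y -> on_seg x y z -> S z.
Proof. intros HS Hx Hy [t [Ht ->]]. apply HS; auto. Qed.

Lemma homothet_convex C lam w : convex C -> convex (homothet C lam w).
Proof.
  intros HC x y t [x' [Hx ->]] [y' [Hy ->]] Ht.
  exists (padd (pscale (1 - t) x') (pscale t y')). split; [apply HC; auto | pt_eq].
Qed.

Lemma convex_ray (C : pt -> Prop) x v r mu :
  convex C -> C x -> C (padd x (pscale r v)) -> 0 <= mu <= r ->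
  C (padd x (pscale mu v)).
Proof.
  intros HC Hx Hxr Hmu.
  destruct (Rle_lt_dec r 0) as [Hr0|Hr].
  - replace mu with 0 by lra. transport Hx.
  - transport (HC _ _ (mu / r) Hx Hxr (Rdiv_unit_interval _ _ Hmu Hr)).
Qed.

(* Read X, Y as the preimages in C of the crossing point under the two homothets
   and s v, r w as the offsets of an endpoint of each segment; the conclusions say
   that the other homothet contains that endpoint, k being the ratio of the
   dilation factors. *)

Lemma convex_parallel_exchange (C : pt -> Prop) X Y v s r k :
  convex C -> 0 <= s -> 0 <= r -> 0 < k ->
  C X -> C Y -> C (padd X (pscale s v)) -> C (padd Y (pscale r v)) ->
  C (padd Y (pscale (s / k) v)) \/ C (padd X (pscale (k * r) v)).
Proof.
  intros HC Hs Hr Hk HX HY HXs HYr.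
  destruct (Rle_lt_dec s (k * r)) as [Hle|Hlt].
  - left. apply (convex_ray C Y v r); auto.
    split; [apply Rle_div_iff | apply Rdiv_le_iff]; lra.
  - right. apply (convex_ray C X v s); auto. nra.
Qed.

Lemma convex_cone_point (C : pt -> Prop) X Y v w s r y1 y2 :
  convex C -> 0 <= s -> 0 < r -> 0 <= y1 -> 0 <= y2 ->
  C (padd X (pscale s v)) -> C (padd Y (pscale r w)) ->
  Y = padd X (padd (pscale (- y1) v) (pscale y2 w)) ->
  C (padd Y (pscale (r * (s + y1) / (r + y2)) v)).
Proof.
  intros HC Hs Hr Hy1 Hy2 HXs HYr ->.
  transport (HC _ _ (r / (r + y2)) HYr HXs ltac:(apply Rdiv_unit_interval; lra)).
Qed.

Lemma convex_cone_exchange (C : pt -> Prop) X Y v w s r y1 y2 k :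
  convex C -> 0 <= s -> 0 <= r -> 0 <= y1 -> 0 <= y2 -> 0 < k ->
  C X -> C Y -> C (padd X (pscale s v)) -> C (padd Y (pscale r w)) ->
  Y = padd X (padd (pscale (- y1) v) (pscale y2 w)) ->
  C (padd Y (pscale (s / k) v)) \/ C (padd X (pscale (k * r) w)).
Proof.
  intros HC Hs Hr Hy1 Hy2 Hk HX HY HXs HYr HXY.
  destruct (Rle_lt_dec r 0) as [Hr0|Hrpos].
  { right. replace (k * r) with 0 by nra. transport HX. }
  destruct (Rle_lt_dec s 0) as [Hs0|Hspos].
  { left. replace (s / k) with 0 by (replace s with 0 by lra; field; lra). transport HY. }
  destruct (Rle_lt_dec (s * (r + y2)) (k * (r * (s + y1)))) as [Hle|Hlt].
  - left. apply (convex_ray C Y v (r * (s + y1) / (r + y2))); auto.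
    + exact (convex_cone_point C X Y v w s r y1 y2 HC Hs Hrpos Hy1 Hy2 HXs HYr HXY).
    + split; [apply Rle_div_iff | apply Rdiv_le_div]; lra.
  - right. apply (convex_ray C X w (s * (r + y2) / (s + y1))); auto.
    + apply (convex_cone_point C Y X w v r s y2 y1); auto. subst Y; pt_eq.
    + split; [nra | apply Rle_div_iff]; lra.
Qed.

Lemma convex_crossing (C : pt -> Prop) X Y e u s1 s2 r1 r2 k :
  convex C -> 0 < k -> 0 <= s1 -> 0 <= s2 -> 0 <= r1 -> 0 <= r2 ->
  C X -> C Y ->
  C (padd X (pscale (- s1) e)) -> C (padd X (pscale s2 e)) ->
  C (padd Y (pscale (- r1) u)) -> C (padd Y (pscale r2 u)) ->
  C (padd X (pscale (- (k * r1)) u)) \/ C (padd X (pscale (k * r2) u)) \/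
  C (padd Y (pscale (- (s1 / k)) e)) \/ C (padd Y (pscale (s2 / k) e)).
Proof.
  intros HC Hk Hs1 Hs2 Hr1 Hr2 HX HY Ha Hb Hc Hd.
  destruct (Req_dec (cross e u) 0) as [Hpar|Hbasis].
  - destruct (cross_eq0_parallel e u Hpar) as [He0|[m ->]].
    { do 2 right; left. subst e. transport HY. }
    destruct (Rle_lt_dec 0 m) as [Hm|Hm].
    + destruct (convex_parallel_exchange C X Y (pscale (-1) e) s1 (r1 * m) k HC Hs1
        ltac:(nra) Hk HX HY ltac:(transport Ha) ltac:(transport Hc)) as [H|H].
      * do 2 right; left. transport H.
      * left. transport H.
    + destruct (convex_parallel_exchange C X Y (pscale (-1) e) s1 (r2 * - m) k HC Hs1
        ltac:(nra) Hk HX HY ltac:(transport Ha) ltac:(transport Hd)) as [H|H].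
      * do 2 right; left. transport H.
      * right; left. transport H.
  - destruct (cross_neq0_basis e u (padd Y (pscale (-1) X)) Hbasis) as [z1 [z2 Hz]].
    assert (HXY : Y = padd X (padd (pscale z1 e) (pscale z2 u))) by (rewrite <- Hz; pt_eq).
    destruct (Rle_lt_dec 0 z1) as [Hz1|Hz1]; destruct (Rle_lt_dec 0 z2) as [Hz2|Hz2].
    + destruct (convex_cone_exchange C X Y (pscale (-1) e) u s1 r2 z1 z2 k HC Hs1 Hr2
        Hz1 Hz2 Hk HX HY ltac:(transport Ha) Hd ltac:(subst Y; pt_eq)) as [H|H].
      * do 2 right; left. transport H.
      * right; left. transport H.
    + destruct (convex_cone_exchange C X Y (pscale (-1) e) (pscale (-1) u) s1 r1 z1 (- z2) k
        HC Hs1 Hr1 Hz1 ltac:(lra) Hk HX HY ltac:(transport Ha) ltac:(transport Hc)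
        ltac:(subst Y; pt_eq)) as [H|H].
      * do 2 right; left. transport H.
      * left. transport H.
    + destruct (convex_cone_exchange C X Y e u s2 r2 (- z1) z2 k HC Hs2 Hr2 ltac:(lra) Hz2 Hk
        HX HY Hb Hd ltac:(subst Y; pt_eq)) as [H|H].
      * do 3 right. transport H.
      * right; left. transport H.
    + destruct (convex_cone_exchange C X Y e (pscale (-1) u) s2 r1 (- z1) (- z2) k HC Hs2 Hr1
        ltac:(lra) ltac:(lra) Hk HX HY Hb ltac:(transport Hc) ltac:(subst Y; pt_eq)) as [H|H].
      * do 3 right. transport H.
      * left. transport H.
Qed.

Lemma homothets_crossing (C : pt -> Prop) l1 w1 l2 w2 a b c d p :
  convex C -> 0 < l1 -> 0 < l2 ->
  homothet C l1 w1 a -> homothet C l1 w1 b ->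
  homothet C l2 w2 c -> homothet C l2 w2 d ->
  on_seg a b p -> on_seg c d p ->
  homothet C l1 w1 c \/ homothet C l1 w1 d \/ homothet C l2 w2 a \/ homothet C l2 w2 b.
Proof.
  intros HC Hl1 Hl2 [xa [Ha ->]] [xb [Hb ->]] [xc [Hc ->]] [xd [Hd ->]]
    [t1 [Ht1 ->]] [t2 [Ht2 Hp]].
  (* Solving the crossing equation for w2 leaves only field identities below. *)
  assert (Hw2 : w2 = padd (padd (pscale l1 (padd (pscale (1 - t1) xa) (pscale t1 xb))) w1)
                          (pscale (- l2) (padd (pscale (1 - t2) xc) (pscale t2 xd)))).
  { revert Hp; destruct xa, xb, xc, xd, w1, w2; unfold padd, pscale; simpl.
    intros Hp; injection Hp as E1 E2; f_equal; lra. }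
  subst w2.
  destruct (convex_crossing C (padd (pscale (1 - t1) xa) (pscale t1 xb))
              (padd (pscale (1 - t2) xc) (pscale t2 xd))
              (padd xb (pscale (-1) xa)) (padd xd (pscale (-1) xc))
              t1 (1 - t1) t2 (1 - t2) (l2 / l1) HC ltac:(apply Rdiv_lt_0_compat; lra)
              ltac:(lra) ltac:(lra) ltac:(lra) ltac:(lra) (HC _ _ _ Ha Hb Ht1) (HC _ _ _ Hc Hd Ht2)
              ltac:(transport Ha) ltac:(transport Hb) ltac:(transport Hc) ltac:(transport Hd))
    as [H|[H|[H|H]]]; [left | right; left | do 2 right; left | do 3 right];
    eexists; split; try exact H; pt_eq.
Qed.

Lemma on_seg_sym a b p : on_seg a b p -> on_seg b a p.
Proof. intros [t [Ht ->]]. exists (1 - t). split; [lra | pt_eq]. Qed.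

Lemma st_adj_sym P C a b : st_adj P C a b -> st_adj P C b a.
Proof.
  intros (Ha & Hb & Hab & lam & w & Hl & H).
  repeat split; auto. exists lam, w; split; auto.
  intros q Hq. rewrite (H q Hq). tauto.
Qed.

Lemma st_adj_no_vertex_on_edge P C u v w :
  convex C -> st_adj P C u v -> In w P -> w <> u -> w <> v -> ~ on_seg u v w.
Proof.
  intros HC (Hu & Hv & _ & lam & w0 & _ & Hexact) Hw Hwu Hwv Hseg.
  assert (Hh : homothet C lam w0 w).
  { apply (convex_on_seg _ u v); auto using homothet_convex.
    - apply Hexact; auto.
    - apply Hexact; auto. }
  destruct (proj1 (Hexact w Hw) Hh); auto.
Qed.

Lemma on_seg_shorter a b d t t' : 0 < t' -> 0 <= t <= t' ->
  padd (pscale (1 - t) a) (pscale t b) = padd (pscale (1 - t') a) (pscale t' d) ->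
  on_seg a b d.
Proof.
  intros Ht' Ht Hp. exists (t / t'). split; [apply Rdiv_unit_interval; lra|].
  revert Hp; destruct a as [a1 a2], b as [b1 b2], d as [d1 d2].
  unfold padd, pscale; simpl; intros Hp; injection Hp as E1 E2.
  f_equal; apply (Rmult_eq_reg_l t'); try lra; field_simplify; lra.
Qed.

Lemma on_seg_common_point a b d p :
  on_seg a b p -> on_seg a d p -> p = a \/ on_seg a b d \/ on_seg a d b.
Proof.
  intros [t [Ht ->]] [t' [Ht' Hp]].
  destruct (Rle_lt_dec t 0) as [Ht0|Htpos].
  { left. replace t with 0 by lra. pt_eq. }
  right. destruct (Rle_lt_dec t t') as [Hle|Hlt].
  - left. apply (on_seg_shorter a b d t t'); auto; lra.
  - right. apply (on_seg_shorter a d b t' t); auto; lra.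
Qed.

Lemma st_adj_common_endpoint P C a b d p :
  convex C -> st_adj P C a b -> st_adj P C a d -> b <> d ->
  on_seg a b p -> on_seg a d p -> p = a.
Proof.
  intros HC Hab Had Hbd Hp1 Hp2.
  destruct (on_seg_common_point a b d p Hp1 Hp2) as [->|[H|H]]; [reflexivity | exfalso ..].
  - destruct Had as (_ & Hd & Had' & _).
    apply (st_adj_no_vertex_on_edge P C a b d); auto.
  - destruct Hab as (_ & Hb & Hab' & _).
    apply (st_adj_no_vertex_on_edge P C a d b); auto.
Qed.

Lemma st_adj_crossing_share P C a b c d p :
  convex C -> st_adj P C a b -> st_adj P C c d -> on_seg a b p -> on_seg c d p ->
  a = c \/ a = d \/ b = c \/ b = d.
Proof.
  intros HC (Ha & Hb & _ & l1 & w1 & Hl1 & H1) (Hc & Hd & _ & l2 & w2 & Hl2 & H2) Hp1 Hp2.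
  destruct (homothets_crossing C l1 w1 l2 w2 a b c d p HC Hl1 Hl2
              (proj2 (H1 a Ha) (or_introl eq_refl)) (proj2 (H1 b Hb) (or_intror eq_refl))
              (proj2 (H2 c Hc) (or_introl eq_refl)) (proj2 (H2 d Hd) (or_intror eq_refl))
              Hp1 Hp2) as [K|[K|[K|K]]].
  - destruct (proj1 (H1 c Hc) K) as [->| ->]; tauto.
  - destruct (proj1 (H1 d Hd) K) as [->| ->]; tauto.
  - destruct (proj1 (H2 a Ha) K) as [->| ->]; tauto.
  - destruct (proj1 (H2 b Hb) K) as [->| ->]; tauto.
Qed.

Theorem mainTheorem2 (C : pt -> Prop) (HC : convex C) (P : list pt) :
  plane_drawing P (st_adj P C).
Proof.
  split.
  - intros u v w Huv. exact (st_adj_no_vertex_on_edge P C u v w HC Huv).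
  - intros a b c d p Hab Hcd Hne Hp1 Hp2.
    destruct (st_adj_crossing_share P C a b c d p HC Hab Hcd Hp1 Hp2) as [<-|[<-|[<-|<-]]].
    + rewrite (st_adj_common_endpoint P C a b d p HC Hab Hcd
                 (fun E => Hne (or_introl (conj eq_refl E))) Hp1 Hp2); tauto.
    + rewrite (st_adj_common_endpoint P C a b c p HC Hab (st_adj_sym _ _ _ _ Hcd)
                 (fun E => Hne (or_intror (conj eq_refl E))) Hp1 (on_seg_sym _ _ _ Hp2)); tauto.
    + rewrite (st_adj_common_endpoint P C b a d p HC (st_adj_sym _ _ _ _ Hab) Hcd
                 (fun E => Hne (or_intror (conj E eq_refl))) (on_seg_sym _ _ _ Hp1) Hp2); tauto.
    + rewrite (st_adj_common_endpoint P C b a c p HC (st_adj_sym _ _ _ _ Hab)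
                 (st_adj_sym _ _ _ _ Hcd) (fun E => Hne (or_introl (conj E eq_refl)))
                 (on_seg_sym _ _ _ Hp1) (on_seg_sym _ _ _ Hp2)); tauto.
Qed.
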